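(* Fix a positive integer $m$. Then the rate $\frac{\log_2|C_{n,m}|}{\binom{n}{2}}$ of the community code $C_{n,m}$ tends to $0$ as $n\to\infty$.
   Context: For integers $n\geq 2$, $N=\binom{n}{2}$ and $1\leq m\leq n$, the community code $C_{n,m}\subseteq\mathbb{F}_2^N$ consists of exactly those binary vectors of length $N$ that are the upper-triangular (off-diagonal) part of the adjacency matrix of a simple undirected graph on the labeled vertex set $\{1,\ldots,n\}$ which is a disjoint union of cliques, each clique having at least $m$ vertices. The rate of $C_{n,m}$ is $\log_2|C_{n,m}|/N$. *)

From Stdlib Require Import Reals.
From mathcomp Require Import all_boot.
Set Implicit Arguments. Unset Strict Implicit. Unset Printing Implicit Defensive.

(* Coordinates of F_2^N, N = 'C(n,2): unordered pairs {i,j}, i<j, of vertices 'I_n. *)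
Definition upair (n : nat) := {x : 'I_n * 'I_n | x.1 < x.2}.

Definition adjmx (n : nat) := {ffun 'I_n * 'I_n -> bool}.

Definition simple_adj n (A : adjmx n) : bool :=
  [forall i, ~~ A (i, i)] && [forall i, forall j, A (i, j) == A (j, i)].

Definition community_adj n (m : nat) (A : adjmx n) : bool :=
  [exists P : {set {set 'I_n}},
    [&& partition P [set: 'I_n],
        [forall B in P, m <= #|B|] &
        [forall i, forall j, (i != j) ==> (A (i, j) == (pblock P i == pblock P j))]]].

Definition upper n (A : adjmx n) : {ffun upair n -> bool} :=
  [ffun p : upair n => A (val p)].

Definition community_code (n m : nat) : {set {ffun upair n -> bool}} :=
  [set v | [exists A : adjmx n,
              [&& simple_adj A, community_adj m A & v == upper A]]].

Definition rate (n m : nat) : R :=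
  (ln (INR #|community_code n m|) / ln 2) / INR 'C(n, 2).

From Stdlib Require Import Reals Lra.
From mathcomp Require Import all_boot.
Set Implicit Arguments. Unset Strict Implicit. Unset Printing Implicit Defensive.

(* Picking a representative in each clique turns every codeword into the
   "same representative" pattern of a map 'I_n -> 'I_n, so |C_{n,m}| <= n^n
   whatever m is.  Hence the rate is at most n log2 n / C(n,2) = 2 log2 n / (n-1),
   which is O(1 / sqrt n) because ln x < 2 sqrt x. *)

Lemma partition_labeling (T : finType) (P : {set {set T}}) (D : {set T}) :
  partition P D ->
  exists g : {ffun T -> T},
    {in D &, forall i j, (g i == g j) = (pblock P i == pblock P j)}.
Proof.
case/and3P => /eqP coverP tiP _.
pose g := [ffun i => odflt i [pick j in pblock P i]].
have g_pblock i : i \in D -> pblock P (g i) = pblock P i.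
  move=> Di; apply: same_pblock => //; rewrite ffunE.
  by case: pickP => [//|/(_ i)]; rewrite mem_pblock coverP Di.
exists g => i j Di Dj; apply/eqP/eqP => [eq_g | eq_P].
  by rewrite -(g_pblock i) // -(g_pblock j) // eq_g.
rewrite !ffunE eq_P.
by case: pickP => [//|/(_ j)]; rewrite mem_pblock coverP Dj.
Qed.

Definition label_word n (g : {ffun 'I_n -> 'I_n}) : {ffun upair n -> bool} :=
  [ffun p => g (val p).1 == g (val p).2].

Lemma community_code_sub_label_words n m :
  community_code n m \subset [set label_word g | g : {ffun 'I_n -> 'I_n}].
Proof.
apply/subsetP => v; rewrite inE.
case/existsP => A /and3P [_ /existsP [P /and3P [partP _ adjP]] /eqP ->].
have [g gP] := partition_labeling partP.
apply/imsetP; exists g => //; apply/ffunP => -[[i j] /= lt_ij].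
rewrite !ffunE /= gP ?inE //; apply/eqP.
by apply: (implyP (forallP (forallP adjP i) j)); rewrite neq_ltn lt_ij.
Qed.

Lemma card_community_code n m : #|community_code n m| <= n ^ n.
Proof.
apply: leq_trans (subset_leq_card (community_code_sub_label_words n m)) _.
by rewrite (leq_trans (leq_imset_card _ _)) // card_ffun !card_ord.
Qed.

Local Open Scope R_scope.

Lemma INR_expn a k : INR (a ^ k) = INR a ^ k.
Proof. by elim: k => [|k IH] //; rewrite expnS mult_INR IH. Qed.

Lemma INR_bin2 n : INR 'C(n, 2) = INR n * (INR n - 1) / 2.
Proof.
have := f_equal INR (bin_ffact n 2); rewrite ffactnS ffactn1 !mult_INR /=.
by case: n => [|n]; rewrite ?S_INR /=; lra.
Qed.

(* Stdlib's [ln] is [0] outside (0, +oo); this matters because C_{n,m} is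
   empty when 0 < n < m. *)
Lemma ln_0 : ln 0 = 0.
Proof. by rewrite /ln; case: Rlt_dec => [lt00 | //]; case: (Rlt_irrefl 0). Qed.

Lemma ln_le_mono x y : 0 < x -> x <= y -> ln x <= ln y.
Proof.
move=> x_gt0 /Rle_lt_or_eq_dec [lt_xy | <-]; last exact: Rle_refl.
exact/Rlt_le/ln_increasing.
Qed.

Lemma ln_INR_ge0 k : 0 <= ln (INR k).
Proof.
case: k => [|k]; first by rewrite ln_0; apply: Rle_refl.
rewrite -ln_1; apply: ln_le_mono; first lra.
by rewrite S_INR; have := pos_INR k; lra.
Qed.

Lemma ln_INR_le a b : (a <= b)%N -> ln (INR a) <= ln (INR b).
Proof.
case: a => [_ | a le_ab]; first by rewrite ln_0; apply: ln_INR_ge0.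
by apply: ln_le_mono; [apply: lt_0_INR | apply: le_INR]; apply/leP.
Qed.

Lemma ln_lt_2_sqrt x : 0 < x -> ln x < 2 * sqrt x.
Proof.
move=> x_gt0; have s_gt0 : 0 < sqrt x by apply: sqrt_lt_R0.
have ln_s : ln (sqrt x) < sqrt x.
  rewrite -{2}(ln_exp (sqrt x)); apply: ln_increasing => //.
  by have := exp_ineq1 (sqrt x); lra.
by rewrite -{1}(sqrt_sqrt x) ?ln_mult //; lra.
Qed.

Lemma ln2_gt0 : 0 < ln 2.
Proof. by have := ln_lt_2; lra. Qed.

Lemma Rinv_INR_ge0 k : 0 <= / INR k.
Proof.
case: (Rle_lt_or_eq_dec _ _ (pos_INR k)) => [k_gt0 | <-].
  exact/Rlt_le/Rinv_pos.
by rewrite Rinv_0; apply: Rle_refl.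
Qed.

Lemma rate_ge0 n m : 0 <= rate n m.
Proof.
rewrite /rate /Rdiv; apply: Rmult_le_pos; last exact: Rinv_INR_ge0.
apply: Rmult_le_pos; first exact: ln_INR_ge0.
exact/Rlt_le/Rinv_pos/ln2_gt0.
Qed.

Lemma rate_le_n_ln n m :
  (0 < n)%N -> rate n m <= INR n * ln (INR n) / ln 2 / INR 'C(n, 2).
Proof.
move=> n_gt0; rewrite /rate /Rdiv.
apply: Rmult_le_compat_r; first exact: Rinv_INR_ge0.
apply: Rmult_le_compat_r; first exact/Rlt_le/Rinv_pos/ln2_gt0.
rewrite -ln_pow; last by apply: lt_0_INR; apply/ltP.
by rewrite -INR_expn; apply/ln_INR_le/card_community_code.
Qed.

Lemma rate_le_inv_sqrt n m : (2 <= n)%N -> rate n m <= 8 / ln 2 / sqrt (INR n).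
Proof.
move=> n_ge2; apply: Rle_trans (rate_le_n_ln m _) _; first exact: leq_trans n_ge2.
rewrite INR_bin2.
have N_ge2 : 2 <= INR n by apply: (le_INR 2); apply/leP.
have lnN_lt : ln (INR n) < 2 * sqrt (INR n) by apply: ln_lt_2_sqrt; lra.
have sqrtK := sqrt_sqrt (INR n) ltac:(lra).
have s_gt0 := sqrt_lt_R0 (INR n) ltac:(lra).
have l2 := ln2_gt0.
set N := INR n in N_ge2 lnN_lt sqrtK s_gt0 *.
set s := sqrt N in lnN_lt sqrtK s_gt0 *; set L := ln N in lnN_lt *.
have -> : N * L / ln 2 / (N * (N - 1) / 2) =
          8 / ln 2 / s - (8 * (N - 1) - 2 * s * L) / (ln 2 * s * (N - 1)).
  by field; lra.
(* [2 s ln N < 4 s^2 = 4 N <= 8 (N - 1)] *)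
suff : 0 <= (8 * (N - 1) - 2 * s * L) / (ln 2 * s * (N - 1)) by lra.
apply: Rmult_le_pos; first nra.
by apply/Rlt_le/Rinv_pos; apply: Rmult_lt_0_compat; [nra | lra].
Qed.

Lemma Un_cv_0_le_inv_sqrt (u : nat -> R) (C : R) (n0 : nat) :
  (forall n, (n0 <= n)%N -> 0 <= u n <= C / sqrt (INR n)) -> Un_cv u 0.
Proof.
move=> u_bound eps eps_gt0.
have [N N_big] := INR_unbounded ((C / eps)²).
exists (maxn N n0) => n /leP; rewrite geq_max => /andP [le_Nn le_n0n].
have [u_ge0 u_le] := u_bound n le_n0n.
have abs_lt_s : Rabs (C / eps) < sqrt (INR n).
  rewrite -sqrt_Rsqr_abs; apply: sqrt_lt_1; first exact: Rle_0_sqr.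
    exact: pos_INR.
  by apply: Rlt_le_trans N_big _; apply/le_INR/leP.
set s := sqrt (INR n) in abs_lt_s *.
have s_gt0 : 0 < s by have := Rabs_pos (C / eps); lra.
have C_lt : C < eps * s.
  have := Rmult_lt_compat_l eps _ _ eps_gt0 (Rle_lt_trans _ _ _ (Rle_abs _) abs_lt_s).
  by rewrite (_ : eps * (C / eps) = C) //; field; lra.
rewrite /R_dist Rminus_0_r Rabs_pos_eq //; apply: Rle_lt_trans u_le _.
apply: (Rmult_lt_reg_r s) => //.
by rewrite /Rdiv Rmult_assoc Rinv_l ?Rmult_1_r //; apply: Rgt_not_eq.
Qed.

Theorem lemma5 (m : nat) (hm : (0 < m)%N) : Un_cv (fun n => rate n m) R0.
Proof.
apply: (@Un_cv_0_le_inv_sqrt _ (8 / ln 2) 2) => n n_ge2.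
by split; [apply: rate_ge0 | apply: rate_le_inv_sqrt].
Qed.
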